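(* Consider the reaction network (MIII) with species $\mathrm{NI}_1,\Lambda_1,\mathrm{NI}_2,\Lambda_2$ and reactions \[ 1:\ \mathrm{NI}_1+\Lambda_1+\Lambda_2\to\mathrm{NI}_1+2\Lambda_2,\qquad 2:\ \mathrm{NI}_2+\Lambda_2+\Lambda_1\to\mathrm{NI}_2+2\Lambda_1, \] with the associated ODEs \[ \begin{cases} [\dot\Lambda_1]=-r_1([\mathrm{NI}_1],[\Lambda_1],[\Lambda_2])+r_2([\mathrm{NI}_2],[\Lambda_2],[\Lambda_1]),\\ [\dot\Lambda_2]=r_1([\mathrm{NI}_1],[\Lambda_1],[\Lambda_2])-r_2([\mathrm{NI}_2],[\Lambda_2],[\Lambda_1]),\\ [\dot{\mathrm{NI}}_1]=[\dot{\mathrm{NI}}_2]=0, \end{cases} \] where $r_1,r_2$ are monotone chemical functions, under the kinetic symmetry constraint $r_1\equiv r_2$. Then the system has the capacity for zero-eigenvalue bifurcations and thus for differentiation.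
   Context: A rate function $r_j$ of a reaction is monotone chemical if it is nonnegative, positive exactly when all its reactant concentrations are positive, independent of non-reactant concentrations, and strictly increasing (positive partial derivative) in each reactant concentration at positive concentrations. Kinetics are assumed parameter-rich, so the partial derivatives of the rates at a positive steady state can be prescribed as arbitrary positive numbers. Kinetic symmetry $r_1\equiv r_2$ means the two rates are the same function of their ordered arguments, evaluated at a homogeneous steady state ($[\mathrm{NI}_1]=[\mathrm{NI}_2]$, $[\Lambda_1]=[\Lambda_2]$). The system has the capacity for zero-eigenvalue bifurcation (differentiation) if there exist such positive derivative values, consistent with kinetic symmetry at a homogeneous positive steady state, for which the Jacobian of the system restricted to the invariant set where $[\mathrm{NI}_1],[\mathrm{NI}_2]$ and $[\Lambda_1]+[\Lambda_2]$ are fixed is singular. *)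

From HB Require Import structures.
From mathcomp Require Import all_boot all_order all_algebra.
From mathcomp Require Import reals.
Set Implicit Arguments. Unset Strict Implicit. Unset Printing Implicit Defensive.
Import Order.TTheory GRing.Theory Num.Theory.
Local Open Scope ring_scope.

(* Species ordering (state vector x : 'cV_4):
     index 0 = [NI_1], 1 = [Lambda_1], 2 = [NI_2], 3 = [Lambda_2].
   Rate r1 takes ordered arguments ([NI_1],[Lambda_1],[Lambda_2]),
   rate r2 takes ordered arguments ([NI_2],[Lambda_2],[Lambda_1]).
   A derivative-value vector d : 'I_3 -> R gives the partial derivatives of a
   rate with respect to its k-th ordered argument at the steady state. *)

Section MIII.
Variable R : realType.

Definition grad_r1 (d : 'I_3 -> R) (j : 'I_4) : R :=
  match val j with
  | 0 => d (@inord 2 0) | 1 => d (@inord 2 1) | 3 => d (@inord 2 2) | _ => 0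
  end.

Definition grad_r2 (d : 'I_3 -> R) (j : 'I_4) : R :=
  match val j with
  | 2 => d (@inord 2 0) | 3 => d (@inord 2 1) | 1 => d (@inord 2 2) | _ => 0
  end.

Definition stoich1 (i : 'I_4) : R :=
  match val i with 1 => -1 | 3 => 1 | _ => 0 end.
Definition stoich2 (i : 'I_4) : R := - stoich1 i.

Definition MIII_jac (d1 d2 : 'I_3 -> R) : 'M[R]_4 :=
  \matrix_(i, j) (stoich1 i * grad_r1 d1 j + stoich2 i * grad_r2 d2 j).

Definition invariant_tangent (v : 'cV[R]_4) : Prop :=
  v 0 0 = 0 /\ v (@inord 3 2) 0 = 0 /\ v (@inord 3 1) 0 + v (@inord 3 3) 0 = 0.

Definition restricted_jac_singular (J : 'M[R]_4) : Prop :=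
  exists v : 'cV[R]_4, invariant_tangent v /\ v != 0 /\ J *m v = 0.

(* Capacity for zero-eigenvalue bifurcation of (MIII) under kinetic symmetry
   r1 == r2, with parameter-rich monotone chemical kinetics: there is a
   homogeneous positive steady state x, rate values rho1, rho2 and positive
   partial derivative values d1, d2 of r1, r2 at it, consistent with kinetic
   symmetry (same function evaluated at the same ordered arguments), such that
   the restricted Jacobian is singular. *)
Definition MIII_capacity : Prop :=
  exists (x : 'cV[R]_4) (rho1 rho2 : R) (d1 d2 : 'I_3 -> R),
    (forall i, 0 < x i 0) /\
    (x 0 0 = x (@inord 3 2) 0 /\ x (@inord 3 1) 0 = x (@inord 3 3) 0) /\
    (0 < rho1 /\ 0 < rho2) /\
    ((forall k, 0 < d1 k) /\ (forall k, 0 < d2 k)) /\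
    (rho1 = rho2 /\ (forall k, d1 k = d2 k)) /\
    (- rho1 + rho2 = 0 /\ rho1 - rho2 = 0) /\
    restricted_jac_singular (MIII_jac d1 d2).

End MIII.

(* The Jacobian of (MIII) has rank at most one: it is the stoichiometric vector
   s of reaction 1 times the difference of the rate gradients.  Since the
   invariant set is tangent to s, the restricted Jacobian is multiplication by
   the scalar (grad r1 - grad r2) . s, which vanishes exactly when the
   derivatives of the rates with respect to the two Lambda arguments balance.
   Kinetic symmetry allows this, e.g. with all derivatives equal. *)
From HB Require Import structures.
From mathcomp Require Import all_boot all_order all_algebra.
From mathcomp Require Import reals.
From mathcomp Require Import ring.
Import GRing.Theory Num.Theory.
Local Open Scope ring_scope.

Lemma val_inord (n k : nat) : (k <= n)%N -> \val (@inord n k) = k.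
Proof. exact: inordK. Qed.

Section MIIIJacobian.
Variable R : realType.

Definition stoich_col : 'cV[R]_4 := \col_i stoich1 R i.

Definition grad_diff_row (d1 d2 : 'I_3 -> R) : 'rV[R]_4 :=
  \row_j (grad_r1 d1 j - grad_r2 d2 j).

Lemma MIII_jacE (d1 d2 : 'I_3 -> R) :
  MIII_jac d1 d2 = stoich_col *m grad_diff_row d1 d2.
Proof.
apply/matrixP => i j; rewrite !mxE big_ord1 !mxE /stoich2.
by rewrite mulNr mulrBr.
Qed.

Lemma grad_diff_stoich (d1 d2 : 'I_3 -> R) :
  grad_diff_row d1 d2 *m stoich_col
  = (d1 (inord 2) + d2 (inord 2) - d1 (inord 1) - d2 (inord 1))%:M.
Proof.
apply/matrixP => i j; rewrite !ord1 !mxE /= mulr1n.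
rewrite !big_ord_recr big_ord0 /= !mxE /grad_r1 /grad_r2 /stoich1 /=.
ring.
Qed.

Lemma stoich_col_tangent : invariant_tangent stoich_col.
Proof. by rewrite /invariant_tangent !mxE /stoich1 !val_inord //= addNr. Qed.

Lemma stoich_col_neq0 : stoich_col != 0.
Proof.
apply/negP => /eqP /matrixP /(_ (inord 3) 0).
by rewrite !mxE /stoich1 val_inord //= => /eqP; rewrite oner_eq0.
Qed.

Lemma MIII_jac_singular (d1 d2 : 'I_3 -> R) :
  d1 (inord 1) + d2 (inord 1) = d1 (inord 2) + d2 (inord 2) ->
  restricted_jac_singular (MIII_jac d1 d2).
Proof.
move=> balanced; exists stoich_col.
split; first exact: stoich_col_tangent.
split; first exact: stoich_col_neq0.
rewrite MIII_jacE -mulmxA grad_diff_stoich -addrA -opprD -balanced subrr.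
by rewrite mul_mx_scalar scale0r.
Qed.

End MIIIJacobian.

Theorem proposition4p1 (R : realType) : MIII_capacity R.
Proof.
exists (const_mx 1), 1, 1, (fun _ => 1), (fun _ => 1).
split; first by move=> i; rewrite mxE ltr01.
split; first by rewrite !mxE.
split; first by rewrite ltr01.
split; first by split=> k; rewrite ltr01.
split; first by [].
split; first by rewrite subrr addNr.
exact: MIII_jac_singular.
Qed.
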